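(* Let $G$ be a finite simple graph of order $n$ with minimum degree $\delta=\delta(G)\geq 3$. Then $$\gamma_{st}(G)\leq n-2\left\lfloor\frac{2\rho_{o}(G)+\delta-3}{2}\right\rfloor,$$ and this bound is sharp (there exist graphs with $\delta\ge 3$ attaining equality).
   Context: For a vertex $v$, $N(v)$ denotes the open neighborhood of $v$ (the set of vertices adjacent to $v$). A signed total dominating function (STDF) of $G$ is a function $f:V(G)\to\{-1,1\}$ such that $f(N(v))=\sum_{u\in N(v)}f(u)\geq 1$ for every vertex $v$. The signed total domination number $\gamma_{st}(G)$ is the minimum of $f(V(G))=\sum_{v\in V(G)}f(v)$ over all STDFs $f$ of $G$. A set $B\subseteq V(G)$ is an open packing if $N(u)\cap N(v)=\emptyset$ for all distinct $u,v\in B$; the open packing number $\rho_o(G)$ is the maximum cardinality of an open packing in $G$. *)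

From mathcomp Require Import all_boot all_order all_algebra.
Set Implicit Arguments. Unset Strict Implicit. Unset Printing Implicit Defensive.
Import Order.TTheory GRing.Theory Num.Theory.

Definition simple_graph (T : finType) (e : rel T) : Prop :=
  symmetric e /\ irreflexive e.

Definition nbhd (T : finType) (e : rel T) (v : T) : {set T} := [set u | e v u].

Definition deg (T : finType) (e : rel T) (v : T) : nat := #|nbhd e v|.

(* minimum degree delta(G); (equals #|T| = 0 only for the empty graph) *)
Definition mindeg (T : finType) (e : rel T) : nat :=
  \big[minn/#|T|]_(v : T) deg e v.

Definition is_stdf (T : finType) (e : rel T) (f : T -> int) : Prop :=
  (forall v, f v = 1%R \/ f v = (-1)%R) /\
  (forall v, (1 <= \sum_(u in nbhd e v) f u)%R).

Definition weight (T : finType) (f : T -> int) : int := (\sum_(v : T) f v)%R.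

Definition is_gamma_st (T : finType) (e : rel T) (g : int) : Prop :=
  (exists f, is_stdf e f /\ weight f = g) /\
  (forall f, is_stdf e f -> (g <= weight f)%R).

Definition open_packing (T : finType) (e : rel T) (B : {set T}) : bool :=
  [forall u in B, forall v in B, (u != v) ==> [disjoint nbhd e u & nbhd e v]].

Definition rho_o (T : finType) (e : rel T) : nat :=
  \max_(B : {set T} | open_packing e B) #|B|.

(* the bound  n - 2 * floor((2 rho_o + delta - 3)/2)  (numerator is >= 0 when delta >= 3) *)
Definition stdf_bound (T : finType) (e : rel T) : int :=
  (#|T|%:Z - 2%:Z * (((2 * rho_o e + mindeg e - 3) %/ 2)%N)%:Z)%R.

From mathcomp Require Import all_boot all_order all_algebra zify.
Import Order.TTheory GRing.Theory Num.Theory.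

Set Implicit Arguments.
Unset Strict Implicit.

Local Open Scope ring_scope.

(* Take a maximum open packing B. Since the neighbourhoods of distinct vertices
   of B are disjoint, every neighbourhood meets B in at most one vertex. Add to B
   a set S of floor((delta - 3)/2) further vertices and put f = -1 exactly on
   B :|: S: each neighbourhood has at least delta vertices, of which at most
   1 + #|S| are negative, so f is a signed total dominating function, and its
   weight n - 2 (rho_o + #|S|) is the bound. The complete graph K_4 attains it. *)

Lemma subset_of_card (T : finType) (A : {set T}) k :
  (k <= #|A|)%N -> exists2 S : {set T}, S \subset A & #|S| = k.
Proof.
case/card_geqP=> s [s_uniq s_size sA]; exists [set x in s].
  by apply/subsetP=> x; rewrite inE => /sA.
by rewrite cardsE (card_uniqP s_uniq).
Qed.

Section SignFunctions.
Variable T : finType.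

Definition sign_off (D : {set T}) (x : T) : int := if x \in D then -1 else 1.

Lemma sign_off_pm1 D x : sign_off D x = 1 \/ sign_off D x = -1.
Proof. by rewrite /sign_off; case: ifP; [right | left]. Qed.

Lemma sum_sign_off (A D : {set T}) :
  \sum_(x in A) sign_off D x = #|A|%:Z - 2%:Z * #|A :&: D|%:Z.
Proof.
rewrite (bigID (mem D)) /=.
rewrite (eq_big (mem (A :&: D)) (fun _ => -1)); first last.
- by move=> x /andP[_ xD]; rewrite /sign_off xD.
- by move=> x; rewrite !inE.
rewrite [X in _ + X](eq_big (mem (A :\: D)) (fun _ => 1)); first last.
- by move=> x /andP[_ /negbTE xD]; rewrite /sign_off xD.
- by move=> x; rewrite !inE andbC.
by rewrite !sumr_const -(cardsID D A) mulNrn !natz; lia.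
Qed.

Lemma weight_sign_off (D : {set T}) :
  weight (sign_off D) = #|T|%:Z - 2%:Z * #|D|%:Z.
Proof.
have -> : weight (sign_off D) = \sum_(x in [set: T]) sign_off D x.
  by apply: eq_bigl => x; rewrite inE.
by rewrite sum_sign_off setTI cardsT.
Qed.

End SignFunctions.

Section UpperBound.
Variables (T : finType) (e : rel T).

Lemma mindeg_le_deg v : (mindeg e <= deg e v)%N.
Proof.
rewrite /mindeg; elim: (index_enum T) (mem_index_enum v) => // u r IHr.
rewrite inE big_cons => /predU1P[<- | /IHr]; first exact: geq_minl.
exact: leq_trans (geq_minr _ _).
Qed.

Lemma mindeg_le_card : (mindeg e <= #|T|)%N.
Proof. by rewrite /mindeg; elim/big_rec: _ => // v m _; apply: leq_trans (geq_minr _ _). Qed.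

Lemma rho_o_attained : exists2 B, open_packing e B & #|B| = rho_o e.
Proof.
have [B B_pack B_max] : {B | open_packing e B & rho_o e = #|B|}.
  apply: eq_bigmax_cond; apply/card_gt0P; exists set0.
  by apply/forall_inP=> u; rewrite inE.
by exists B.
Qed.

Hypothesis e_sym : symmetric e.

(* The common neighbour w of two distinct vertices of B would contradict disjointness. *)
Lemma open_packing_nbhd_meet (B : {set T}) w :
  open_packing e B -> (#|nbhd e w :&: B| <= 1)%N.
Proof.
move=> B_pack; apply/card_le1_eqP=> x y.
rewrite !inE => /andP[wx xB] /andP[wy yB].
apply/eqP; apply: contraT; rewrite eq_sym => nxy.
move/forall_inP: B_pack => /(_ x xB) /forall_inP /(_ y yB) /implyP /(_ nxy).
by move=> /(disjointFr (x:=w)); rewrite !inE (e_sym x) (e_sym y) wx wy => /(_ isT).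
Qed.

Lemma stdf_sign_off (B S : {set T}) :
  open_packing e B -> (2 * #|S| + 3 <= mindeg e)%N ->
  is_stdf e (sign_off (B :|: S)).
Proof.
move=> B_pack S_small; split=> [x|w]; first exact: sign_off_pm1.
rewrite sum_sign_off setIUr.
have meetU := (leq_card_setU (nbhd e w :&: B) (nbhd e w :&: S)).1.
have meetS : (#|nbhd e w :&: S| <= #|S|)%N by apply/subset_leq_card/subsetIr.
have := open_packing_nbhd_meet w B_pack; have := mindeg_le_deg w.
rewrite /deg; lia.
Qed.

Lemma stdf_of_bound_weight :
  (3 <= mindeg e)%N -> exists2 f, is_stdf e f & weight f = stdf_bound e.
Proof.
move=> mindeg_ge3.
have [v _] : exists v, v \in T.
  by apply/card_gt0P; apply: leq_trans _ mindeg_le_card; apply: leq_trans _ mindeg_ge3.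
have [B B_pack B_card] := rho_o_attained.
have room : ((mindeg e - 3) %/ 2 <= #|nbhd e v :\: B|)%N.
  rewrite cardsD; have := open_packing_nbhd_meet v B_pack.
  have := mindeg_le_deg v; rewrite /deg; lia.
have [S S_sub S_card] := subset_of_card room.
have BS_disj : B :&: S = set0.
  apply/setP=> x; rewrite !inE; apply/negbTE/andP=> -[xB xS].
  by have := subsetP S_sub x xS; rewrite !inE xB.
exists (sign_off (B :|: S)); first by apply: stdf_sign_off; lia.
rewrite weight_sign_off cardsU BS_disj cards0 /stdf_bound -B_card S_card; lia.
Qed.

End UpperBound.

Section CompleteGraph.
Variable n : nat.

Definition complete_graph : rel 'I_n := fun i j => i != j.

Lemma complete_graph_simple : simple_graph complete_graph.
Proof. by split=> [i j | i]; rewrite /complete_graph ?eqxx // eq_sym. Qed.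

Lemma nbhd_complete_graph v : nbhd complete_graph v = [set~ v].
Proof. by apply/setP=> u; rewrite !inE /complete_graph eq_sym. Qed.

Lemma sum_nbhd_complete_graph f v :
  \sum_(u in nbhd complete_graph v) f u = weight f - f v.
Proof.
rewrite /weight [\sum_u f u](bigD1 v) //= addrC addrK.
by apply: eq_bigl => u; rewrite nbhd_complete_graph !inE.
Qed.

End CompleteGraph.

Arguments complete_graph : clear implicits.

Lemma mindeg_complete_graph n : mindeg (complete_graph n.+1) = n.
Proof.
apply/eqP; rewrite eqn_leq.
have deg_n v : deg (complete_graph n.+1) v = n.
  by rewrite /deg nbhd_complete_graph cardsC1 card_ord.
apply/andP; split.
  by have := mindeg_le_deg (complete_graph n.+1) ord0; rewrite deg_n.
rewrite /mindeg; elim/big_rec: _ => [|v m _ n_le_m]; first by rewrite card_ord.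
by rewrite leq_min deg_n leqnn.
Qed.

(* Any third vertex is a common neighbour of two vertices of K_n. *)
Lemma rho_o_complete_graph n : rho_o (complete_graph n.+3) = 1%N.
Proof.
apply/eqP; rewrite eqn_leq; apply/andP; split.
  apply/bigmax_leqP=> B B_pack; apply/card_le1_eqP=> u w uB wB.
  apply/eqP; apply: contraT; rewrite eq_sym => nuw.
  have : (0 < #|~: [set u; w]|)%N.
    by rewrite cardsCs setCK cards2 nuw card_ord.
  case/card_gt0P=> x; rewrite !inE negb_or => /andP[xu xw].
  move/forall_inP: B_pack => /(_ u uB) /forall_inP /(_ w wB) /implyP /(_ nuw).
  move=> /(disjointFr (x:=x)).
  by rewrite !nbhd_complete_graph !inE xu xw => /(_ isT).
have single : open_packing (complete_graph n.+3) [set ord0].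
  by apply/forall_inP=> u /set1P->; apply/forall_inP=> w /set1P->; rewrite eqxx.
by apply: leq_trans (leq_bigmax_cond _ single); rewrite cards1.
Qed.

(* If the weight were at most 1, every vertex would be negative, since f(N(v)) = weight f - f v >= 1. *)
Lemma complete_graph_stdf_weight n f :
  is_stdf (complete_graph n.+1) f -> 2%:Z <= weight f.
Proof.
move=> [f_pm1 f_dom]; rewrite leNgt; apply/negP=> weight_small.
have all_neg v : f v = -1.
  have := f_dom v; rewrite sum_nbhd_complete_graph.
  by case: (f_pm1 v) => ->; lia.
have := f_dom ord0; rewrite sum_nbhd_complete_graph /weight.
by rewrite (eq_bigr (fun _ => -1)) // sumr_const card_ord all_neg; lia.
Qed.

Local Close Scope ring_scope.

Theorem theorem2p1 :
  (forall (T : finType) (e : rel T), simple_graph e -> 3 <= mindeg e ->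
     forall g : int, is_gamma_st e g -> (g <= stdf_bound e)%R)
  /\
  (exists (m : nat) (e : rel 'I_m), simple_graph e /\ 3 <= mindeg e /\
     is_gamma_st e (stdf_bound e)).
Proof.
split=> [T e [e_sym _] mindeg_ge3 g [_ g_min] | ].
  have [f f_stdf <-] := stdf_of_bound_weight e_sym mindeg_ge3.
  exact: g_min.
have K4_simple := complete_graph_simple 4.
have K4_mindeg : mindeg (complete_graph 4) = 3 by apply: mindeg_complete_graph.
have K4_bound : stdf_bound (complete_graph 4) = 2%:Z%R.
  by rewrite /stdf_bound rho_o_complete_graph K4_mindeg card_ord.
exists 4, (complete_graph 4).
split; first exact: K4_simple.
split; first by rewrite K4_mindeg.
split.
  have [f f_stdf f_weight] :=
    stdf_of_bound_weight K4_simple.1 (eq_leq (esym K4_mindeg)).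
  by exists f.
by move=> f; rewrite K4_bound; apply: complete_graph_stdf_weight.
Qed.
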